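(* Let $n,m\ge1$, $S=\{(x,y)\in\mathbb{R}^{n+m} : \|x\|\le\|y\|\}$, and for $\lambda\in\mathbb{R}^n$ with $\|\lambda\|=1$ let $C_\lambda=\{(x,y)\in\mathbb{R}^{n+m} : \lambda^\mathsf{T} x\ge\|y\|\}$. Then $C_\lambda$ is a maximal $S$-free set. Furthermore, if $(\bar x,\bar y)\in\mathbb{R}^{n+m}$ satisfies $\|\bar x\|>\|\bar y\|$ and $\lambda=\bar x/\|\bar x\|$, then $(\bar x,\bar y)\in\operatorname{int}(C_\lambda)$.
   Context: $\|\cdot\|$ is the Euclidean norm. For a closed set $S\subseteq\mathbb{R}^N$, a convex set $C$ is $S$-free if $\operatorname{int}(C)\cap S=\emptyset$, and maximal $S$-free if it is $S$-free and no $S$-free convex set strictly contains it. *)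

From HB Require Import structures.
From mathcomp Require Import all_boot all_order all_algebra.
From mathcomp Require Import all_classical all_reals all_analysis.
Set Implicit Arguments. Unset Strict Implicit. Unset Printing Implicit Defensive.
Import Order.TTheory GRing.Theory Num.Theory.
Import numFieldNormedType.Exports.
Local Open Scope classical_set_scope.
Local Open Scope ring_scope.

(* R^N is modelled as row vectors 'rV[R]_N, with their canonical (product)
   topology from MathComp-Analysis; a point of R^(n+m) is split as (x,y) with
   x = lsubmx p and y = rsubmx p. *)

Definition enorm {R : realType} {N : nat} (x : 'rV[R]_N) : R :=
  Num.sqrt (\sum_(i < N) x 0 i ^+ 2).

Definition dotp {R : realType} {N : nat} (u v : 'rV[R]_N) : R :=
  \sum_(i < N) u 0 i * v 0 i.

Definition convex_set {R : realType} {N : nat} (C : set 'rV[R]_N) : Prop :=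
  forall a b, C a -> C b -> forall t : R, 0 <= t -> t <= 1 ->
    C (t *: a + (1 - t) *: b).

Definition S_free {R : realType} {N : nat} (S C : set 'rV[R]_N) : Prop :=
  convex_set C /\ interior C `&` S = set0.

Definition maximal_S_free {R : realType} {N : nat} (S C : set 'rV[R]_N) : Prop :=
  S_free S C /\ forall D, S_free S D -> C `<=` D -> D = C.

Definition Scone {R : realType} (n m : nat) : set 'rV[R]_(n + m) :=
  [set p | enorm (lsubmx p) <= enorm (rsubmx p)].

Definition Clam {R : realType} (n m : nat) (lam : 'rV[R]_n) : set 'rV[R]_(n + m) :=
  [set p | enorm (rsubmx p) <= dotp lam (lsubmx p)].

From Pilot Require Import Defs.
From HB Require Import structures.
From mathcomp Require Import all_boot all_order all_algebra.
From mathcomp Require Import all_classical all_reals all_analysis.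
From mathcomp Require Import ring lra.
Import Order.TTheory GRing.Theory Num.Theory.
Import numFieldNormedType.Exports.
Local Open Scope classical_set_scope.
Local Open Scope ring_scope.
Set Implicit Arguments. Unset Strict Implicit. Unset Printing Implicit Defensive.

(* C_lam is convex since the Euclidean norm is subadditive.  Its interior misses S:
   an interior point (x, y) may be pushed slightly in the direction (-lam, 0) while
   staying in C_lam, which gives ||y|| < lam^T x <= ||x|| by Cauchy-Schwarz.
   For maximality, let D be a convex S-free superset of C_lam and (x, y) in D with
   lam^T x < ||y||.  Then c = (||y|| lam - x, 0) satisfies the defining inequality of
   C_lam strictly, so c is interior to C_lam, hence to D, and by convexity so is the
   midpoint (||y|| lam / 2, y / 2) of (x, y) and c; but that midpoint lies in S.
   The second claim holds because lam^T xbar = ||xbar|| > ||ybar|| and the strict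
   inequality defines an open subset of C_lam. *)

Section Euclidean.
Variables (R : realType) (N : nat).
Implicit Types (u v w : 'rV[R]_N) (t : R).

Lemma enorm_ge0 u : 0 <= enorm u.
Proof. exact: sqrtr_ge0. Qed.

Lemma sqr_enorm u : enorm u ^+ 2 = \sum_i u 0 i ^+ 2.
Proof. by rewrite sqr_sqrtr // sumr_ge0 // => i _; rewrite sqr_ge0. Qed.

Lemma enorm_eq0 u : enorm u = 0 -> u = 0.
Proof.
move=> u0; apply/rowP => i; rewrite mxE; apply/eqP; rewrite -sqrf_eq0.
have /eqP := sqr_enorm u; rewrite u0 expr0n /= eq_sym psumr_eq0 => [|j _].
  by move=> /allP/(_ i (mem_index_enum _)).
exact: sqr_ge0.
Qed.

Lemma enormZ t u : enorm (t *: u) = `|t| * enorm u.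
Proof.
rewrite /enorm (eq_bigr (fun i => t ^+ 2 * u 0 i ^+ 2)) => [|i _]; last first.
  by rewrite mxE exprMn.
by rewrite -mulr_sumr sqrtrM ?sqr_ge0 // sqrtr_sqr.
Qed.

Lemma enorm0 : enorm (0 : 'rV[R]_N) = 0.
Proof. by rewrite -(scale0r 0) enormZ normr0 mul0r. Qed.

Lemma dotpp u : dotp u u = enorm u ^+ 2.
Proof. by rewrite sqr_enorm; apply: eq_bigr => i _; rewrite expr2. Qed.

Lemma dotpC u v : dotp u v = dotp v u.
Proof. by apply: eq_bigr => i _; rewrite mulrC. Qed.

Lemma dotpDr u v w : dotp u (v + w) = dotp u v + dotp u w.
Proof. by rewrite /dotp -big_split; apply: eq_bigr => i _; rewrite mxE mulrDr. Qed.

Lemma dotpZr t u v : dotp u (t *: v) = t * dotp u v.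
Proof. by rewrite /dotp mulr_sumr; apply: eq_bigr => i _; rewrite mxE mulrCA. Qed.

Lemma dotpZl t u v : dotp (t *: u) v = t * dotp u v.
Proof. by rewrite dotpC dotpZr dotpC. Qed.

Lemma dotpNr u v : dotp u (- v) = - dotp u v.
Proof. by rewrite -scaleN1r dotpZr mulN1r. Qed.

Lemma dotp0r u : dotp u 0 = 0.
Proof. by rewrite -(scale0r 0) dotpZr mul0r. Qed.

Lemma cauchy_schwarz u v : dotp u v <= enorm u * enorm v.
Proof.
have [->|u0] := eqVneq u 0; first by rewrite dotpC dotp0r enorm0 mul0r.
have [->|v0] := eqVneq v 0; first by rewrite dotp0r enorm0 mulr0.
have enorm_gt0 w : w != 0 -> 0 < enorm w.
  by move=> w0; rewrite lt_def enorm_ge0 andbT; apply: contra_neq w0 => /enorm_eq0.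
set a := enorm u; set b := enorm v.
have ab_gt0 : 0 < a * b by rewrite mulr_gt0 ?enorm_gt0.
have lagrange : \sum_i (b * u 0 i - a * v 0 i) ^+ 2 = 2 * (a * b) * (a * b - dotp u v).
  rewrite (eq_bigr (fun i => b ^+ 2 * u 0 i ^+ 2 - 2 * (a * b) * (u 0 i * v 0 i)
                              + a ^+ 2 * v 0 i ^+ 2)) => [|i _]; last by ring.
  rewrite !big_split sumrN /= -!mulr_sumr -!sqr_enorm -/a -/b /dotp; ring.
have : 0 <= 2 * (a * b) * (a * b - dotp u v).
  by rewrite -lagrange sumr_ge0 // => i _; rewrite sqr_ge0.
by rewrite pmulr_rge0 ?subr_ge0 // mulr_gt0.
Qed.

Lemma enormD u v : enorm (u + v) <= enorm u + enorm v.
Proof.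
have a0 := enorm_ge0 u; have b0 := enorm_ge0 v.
rewrite -[leRHS]ger0_norm ?addr_ge0 // -sqrtr_sqr; apply: ler_wsqrtr.
have -> : \sum_i (u + v) 0 i ^+ 2 = enorm u ^+ 2 + 2 * dotp u v + enorm v ^+ 2.
  rewrite (eq_bigr (fun i => u 0 i ^+ 2 + 2 * (u 0 i * v 0 i) + v 0 i ^+ 2)) => [|i _].
    by rewrite !big_split /= -mulr_sumr !sqr_enorm.
  by rewrite mxE; ring.
have := cauchy_schwarz u v; nra.
Qed.

End Euclidean.

Lemma continuous_sum (K : numFieldType) (V : normedModType K) (T : topologicalType)
    (I : Type) (r : seq I) (F : I -> T -> V) :
  (forall i, continuous (F i)) -> continuous (fun z => \sum_(i <- r) F i z).
Proof.
move=> F_cont z; elim: r => [|i r IHr].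
  rewrite (_ : (fun _ => _) = cst 0); first exact: cst_continuous.
  by apply/funext => y; rewrite big_nil.
rewrite (_ : (fun _ => _) = F i \+ fun y => \sum_(j <- r) F j y).
  exact: (continuousD (F_cont i z) IHr).
by apply/funext => y; rewrite big_cons.
Qed.

Section ConvexInterior.
Variables (R : realType) (N : nat).
Implicit Types (A D : set 'rV[R]_N) (z v : 'rV[R]_N).

Lemma interior_shift A z v : interior A z -> exists2 e : R, 0 < e & A (z + e *: v).
Proof.
move=> /nbhs_ballP[r r_gt0 zrA].
have nv_gt0 : 0 < `|v| + 1 by rewrite ltr_wpDl.
exists (r / (`|v| + 1)); first by rewrite divr_gt0.
apply: zrA; rewrite -ball_normE /ball_ /= opprD addNKr normrN normrZ.
by rewrite gtr0_norm ?divr_gt0 // mulrAC ltr_pdivrMr // ltr_pM2l // ltrDl.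
Qed.

Lemma convex_interior_combination D q c (t : R) :
  Defs.convex_set D -> D q -> interior D c -> 0 <= t -> t < 1 ->
  interior D (t *: q + (1 - t) *: c).
Proof.
move=> Dconv Dq /nbhs_ballP[e e_gt0 ceD] t_ge0 t_lt1.
have s_gt0 : 0 < 1 - t by rewrite subr_gt0.
apply/nbhs_ballP; exists ((1 - t) * e); first exact: mulr_gt0.
move=> r; rewrite -ball_normE /ball_ /= => pr.
set c' := (1 - t)^-1 *: (r - t *: q).
have -> : r = t *: q + (1 - t) *: c'.
  by rewrite /c' scalerA mulfV ?gt_eqF // scale1r addrC subrK.
apply: Dconv => //; last exact: ltW.
apply: ceD; rewrite -ball_normE /ball_ /=.
have -> : c - c' = (1 - t)^-1 *: (t *: q + (1 - t) *: c - r).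
  by apply/rowP => i; rewrite /c' !mxE; field; rewrite gt_eqF.
by rewrite normrZ gtr0_norm ?invr_gt0 // ltr_pdivrMl // mulrC.
Qed.

End ConvexInterior.

Section Cone.
Variables (R : realType) (n m : nat).
Implicit Types (lam : 'rV[R]_n) (z : 'rV[R]_(n + m)).

Lemma Clam_convex lam : Defs.convex_set (@Clam R n m lam).
Proof.
move=> a b Ca Cb t t_ge0 t_le1; rewrite /Clam /=.
rewrite !linearD /= !linearZ /= dotpDr !dotpZr.
apply: le_trans (enormD _ _) _.
rewrite !enormZ !ger0_norm ?subr_ge0 //.
by apply: lerD; apply: ler_wpM2l; rewrite ?subr_ge0.
Qed.

Lemma open_Clam_strict lam :
  open [set z : 'rV[R]_(n + m) | enorm (rsubmx z) < dotp lam (lsubmx z)].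
Proof.
have dotp_cont : continuous (fun z : 'rV[R]_(n + m) => dotp lam (lsubmx z)).
  apply: continuous_sum => i z; under eq_fun do rewrite mxE.
  apply: (@continuousM _ _ (fun=> lam 0 i) (fun y : 'rV[R]_(n + m) => y 0 (lshift m i))).
    exact: cst_continuous.
  exact: coord_continuous.
have enorm_cont : continuous (fun z : 'rV[R]_(n + m) => enorm (rsubmx z)).
  move=> z; apply: (continuous_comp _ (@sqrt_continuous R _)).
  apply: continuous_sum => i {}z; under eq_fun do rewrite mxE expr2.
  by apply: continuousM; exact: coord_continuous.
rewrite (_ : [set z | _] =
  (fun z => dotp lam (lsubmx z) - enorm (rsubmx z)) @^-1` [set x | 0 < x]).
  apply: open_comp; last exact: open_gt.
  by move=> z _; exact: (continuousB (dotp_cont z) (enorm_cont z)).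
by apply/seteqP; split => z /=; rewrite subr_gt0.
Qed.

Lemma interior_Clam lam :
  [set z | enorm (rsubmx z) < dotp lam (lsubmx z)] `<=` interior (@Clam R n m lam).
Proof. by rewrite -open_subsetE; [move=> z /ltW | exact: open_Clam_strict]. Qed.

Lemma interior_ClamI_Scone lam :
  enorm lam = 1 -> interior (@Clam R n m lam) `&` @Scone R n m = set0.
Proof.
move=> lam1; apply/seteqP; split=> [z [] | //].
move=> /(interior_shift (row_mx (- lam) 0))[e e_gt0].
rewrite /Clam /Scone /= !linearD /= !linearZ /= row_mxKl row_mxKr scaler0 addr0.
rewrite dotpDr dotpZr dotpNr dotpp lam1 expr1n.
have := cauchy_schwarz lam (lsubmx z); rewrite lam1 mul1r.
lra.
Qed.

Lemma Clam_maximal lam D :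
  enorm lam = 1 -> S_free (@Scone R n m) D -> @Clam R n m lam `<=` D ->
  D = @Clam R n m lam.
Proof.
move=> lam1 [Dconv DS] CD; apply/seteqP; split=> [q Dq | //].
rewrite /Clam /= leNgt; apply/negP => q_out.
set x := lsubmx q in q_out; set y := rsubmx q in q_out.
pose c : 'rV[R]_(n + m) := row_mx (enorm y *: lam - x) 0.
have c_in : interior (@Clam R n m lam) c.
  apply: interior_Clam.
  rewrite /c /= row_mxKl row_mxKr enorm0 dotpDr dotpZr dotpNr dotpp lam1 expr1n.
  by rewrite mulr1 subr_gt0.
have half : 1 - 2^-1 = 2^-1 :> R by field.
pose p := 2^-1 *: q + (1 - 2^-1) *: c.
have p_in_S : @Scone R n m p.
  rewrite /Scone /p half /= !linearD /= !linearZ /= row_mxKl row_mxKr -!scalerDr -/x -/y.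
  by rewrite addr0 addrC subrK !enormZ lam1 mulr1 [`|enorm y|]ger0_norm ?enorm_ge0.
have p_in_D : interior D p.
  apply: convex_interior_combination (interiorS CD c_in) _ _ => //.
  by rewrite invf_lt1 ?ltr1n.
have : (interior D `&` @Scone R n m) p by [].
by rewrite DS.
Qed.

End Cone.

Theorem theorem7 (R : realType) (n m : nat) (hn : (1 <= n)%N) (hm : (1 <= m)%N) :
  (forall lam : 'rV[R]_n, enorm lam = 1 ->
     maximal_S_free (@Scone R n m) (@Clam R n m lam)) /\
  (forall p : 'rV[R]_(n + m), enorm (rsubmx p) < enorm (lsubmx p) ->
     interior (@Clam R n m ((enorm (lsubmx p))^-1 *: lsubmx p)) p).
Proof.
split=> [lam lam1 | p p_out].
  split; last by move=> D; exact: Clam_maximal.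
  by split; [exact: Clam_convex | exact: interior_ClamI_Scone].
apply: interior_Clam => /=.
have x_gt0 : 0 < enorm (lsubmx p) by apply: le_lt_trans p_out; exact: enorm_ge0.
by rewrite dotpZl dotpp expr2 mulKf ?gt_eqF.
Qed.
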